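(* Let $M,X$ be metric spaces with $\#M\ge3$ and $r:=d_{GH}(M,X)<s(M)/2$. Let $d$ be a real number with $r<d\le s(M)/2$. Then: (1) there exists a correspondence $R\in\mathcal{R}(M,X)$ with $\operatorname{dis}R<2d\le s(M)$; (2) for each such $R$, the family $D_R=\{X_i:=R(i)\}_{i\in M}$ is a partition of $X$ (the sets $X_i$ are nonempty, pairwise disjoint and cover $X$); (3) for all $i,j\in M$ (possibly equal) and all $x_i\in X_i$, $x_j\in X_j$, one has $||x_ix_j|-|ij||<2d\le s(M)$; (4) $\operatorname{diam}X_i<2d\le s(M)$ for all $i\in M$; (5) if $d\le s(M)/4$, then the partition $D_R$ is uniquely determined: if $R'\in\mathcal{R}(M,X)$ also satisfies $\operatorname{dis}R'<2d$, then $D_{R'}=D_R$; (6) if $d\le\min\{s(M)/4,e(M)/4\}$, then the correspondence $R\in\mathcal{R}(M,X)$ with $\operatorname{dis}R<2d$ is unique; consequently $R$ is optimal, $\operatorname{dis}R=2d_{GH}(M,X)$, $\operatorname{diam}X_i\le\operatorname{dis}R$ for all $i$, and $||x_ix_j|-|ij||\le\operatorname{dis}R$ for all $i\ne j$, $x_i\in X_i$, $x_j\in X_j$.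
   Context: For sets $X,Y$, a correspondence is a relation $R\subset X\times Y$ whose projections to $X$ and $Y$ are both surjective; $\mathcal{R}(X,Y)$ is the set of correspondences, and $R(x)=\{y:(x,y)\in R\}$. For metric spaces, the distortion is $\operatorname{dis}R=\sup\{||xx'|-|yy'||:(x,y),(x',y')\in R\}$, and the Gromov–Hausdorff distance satisfies $d_{GH}(X,Y)=\frac12\inf\{\operatorname{dis}R: R\in\mathcal{R}(X,Y)\}$; $R$ is optimal if $\operatorname{dis}R=2d_{GH}(X,Y)$. For a metric space $M$ with $\#M\ge3$: $s(M)=\inf\{|xx'|: x\ne x'\}$; $S(M)$ is the set of bijections $M\to M$ and $e(M)=\inf\{\operatorname{dis}f: f\in S(M), f\ne\mathrm{id}\}$, where $\operatorname{dis}f=\sup_{x,x'}||xx'|-|f(x)f(x')||$ (the distortion of the graph of $f$). *)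

From HB Require Import structures.
From mathcomp Require Import all_boot all_order all_algebra.
From mathcomp Require Import all_classical all_reals.
From mathcomp Require Import ereal.
Set Implicit Arguments. Unset Strict Implicit. Unset Printing Implicit Defensive.
Import Order.TTheory GRing.Theory Num.Theory.
Local Open Scope classical_set_scope.
Local Open Scope ring_scope.

Section GH.
Variable R : realType.

Definition is_metric (T : Type) (d : T -> T -> R) : Prop :=
  (forall x y, 0 <= d x y) /\
  (forall x y, d x y = 0 <-> x = y) /\
  (forall x y, d x y = d y x) /\
  (forall x y z, d x z <= d x y + d y z).

(* correspondence: relation C ⊂ X × Y whose projections are surjective;
   C x is the set C(x) = {y | (x,y) ∈ C} *)
Definition correspondence (X Y : Type) (C : X -> set Y) : Prop :=
  (forall x, exists y, C x y) /\ (forall y, exists x, C x y).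

Definition dis (X Y : Type) (dX : X -> X -> R) (dY : Y -> Y -> R)
    (C : X -> set Y) : \bar R :=
  ereal_sup [set t | exists x y x' y',
     C x y /\ C x' y' /\ t = (`| dX x x' - dY y y' |)%:E].

Definition dGH (X Y : Type) (dX : X -> X -> R) (dY : Y -> Y -> R) : \bar R :=
  ((2^-1)%:E * ereal_inf [set dis dX dY C | C in [set C | correspondence C]])%E.

Definition sM (M : Type) (dM : M -> M -> R) : \bar R :=
  ereal_inf [set t | exists x x', x <> x' /\ t = (dM x x')%:E].

Definition graph (X Y : Type) (f : X -> Y) : X -> set Y := fun x y => f x = y.

Definition eM (M : Type) (dM : M -> M -> R) : \bar R :=
  ereal_inf [set dis dM dM (graph f) | f in [set f : M -> M | bijective f /\ f <> id]].

Definition diam (X : Type) (dX : X -> X -> R) (A : set X) : \bar R :=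
  ereal_sup [set t | exists x y, A x /\ A y /\ t = (dX x y)%:E].

End GH.

(* Let dis R < e, with distinct points of M at distance at least 2e.  The
   fibres R(i) are then pairwise disjoint, and a second correspondence R' of
   distortion below e has the same fibres: if x lies in R(i) and R'(j), any
   y in R'(j) satisfies |xy| < e, whereas y in R(k) with k <> i would force
   |xy| > |ik| - e >= e.  Hence R' = R o f for a bijection f of M, and the
   graph of f has distortion at most dis R' + dis R < 2e, so f = id once
   2e <= e(M).  Being the only correspondence of distortion below e, R then
   realises the infimum defining d_GH. *)

From HB Require Import structures.
From mathcomp Require Import all_boot all_order all_algebra.
From mathcomp Require Import all_classical all_reals.
From mathcomp Require Import ereal lra.
Import Order.TTheory GRing.Theory Num.Theory.
Local Open Scope classical_set_scope.
Local Open Scope ring_scope.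
Set Implicit Arguments. Unset Strict Implicit.

Section Distortion.
Variables (R : realType) (X Y : Type) (dX : X -> X -> R) (dY : Y -> Y -> R).

Lemma dis_ubound (C : X -> set Y) x y x' y' : C x y -> C x' y' ->
  ((`|dX x x' - dY y y'|)%:E <= dis dX dY C)%E.
Proof. by move=> h h'; apply: ereal_sup_ubound; exists x, y, x', y'. Qed.

Lemma dis_le (C : X -> set Y) (e : \bar R) :
  (forall x y x' y', C x y -> C x' y' -> ((`|dX x x' - dY y y'|)%:E <= e)%E) ->
  (dis dX dY C <= e)%E.
Proof.
by move=> h; apply: ge_ereal_sup => _ [x [y [x' [y' [? [? ->]]]]]]; apply: h.
Qed.

Lemma dis_lt_dist (C : X -> set Y) (e : R) x y x' y' :
  (dis dX dY C < e%:E)%E -> C x y -> C x' y' -> `|dX x x' - dY y y'| < e.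
Proof.
by move=> hC h h'; rewrite -lte_fin; apply: le_lt_trans hC; apply: dis_ubound.
Qed.

End Distortion.

Lemma lee_EFinM_of_le_divr (R : realType) (k d : R) (e : \bar R) : 0 < k ->
  (d%:E <= e * k^-1%:E)%E -> ((k * d)%:E <= e)%E.
Proof. by move=> k0; rewrite lee_pdivlMr // -EFinM mulrC. Qed.

Section GromovHausdorff.
Variables (R : realType) (M X : Type) (dM : M -> M -> R) (dX : X -> X -> R).

Lemma sM_lbound x x' : x <> x' -> (sM dM <= (dM x x')%:E)%E.
Proof. by move=> h; apply: ereal_inf_lbound; exists x, x'. Qed.

Lemma dGH_lt_ex_correspondence (d : R) : (dGH dM dX < d%:E)%E ->
  exists C : M -> set X, correspondence C /\ (dis dM dX C < (2 * d)%:E)%E.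
Proof.
rewrite /dGH lte_pdivrMl // -EFinM => /ereal_inf_lt[_ [C hC <-] hCd].
by exists C.
Qed.

Lemma dis_graph_le_disD (C C' : M -> set X) (f : M -> M) :
  (forall j, exists x, C' j x) -> (forall j, C' j = C (f j)) ->
  (dis dM dM (graph f) <= dis dM dX C' + dis dM dX C)%E.
Proof.
move=> hne hf; apply: dis_le => j _ j' _ <- <-.
have [x hx] := hne j; have [x' hx'] := hne j'.
have := dis_ubound dM dX hx hx'; rewrite hf in hx; rewrite hf in hx'.
move=> /leeD /(_ (dis_ubound dM dX hx hx')); apply: le_trans.
by rewrite -EFinD lee_fin (distrC (dM (f j) _)) ler_distD.
Qed.

Lemma dis_eq_dGH (C : M -> set X) (e : R) :
  correspondence C -> (dis dM dX C < e%:E)%E ->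
  (forall C', correspondence C' -> (dis dM dX C' < e%:E)%E -> C' = C) ->
  dis dM dX C = (2%:E * dGH dM dX)%E.
Proof.
move=> hC hCe uniq; rewrite /dGH.
have -> : ereal_inf [set dis dM dX C' | C' in [set C' | correspondence C']]
          = dis dM dX C.
  apply/le_anti/andP; split; first by apply: ereal_inf_lbound; exists C.
  apply: le_ereal_inf_tmp => _ [C' hC' <-].
  have [hlt|hge] := ltP (dis dM dX C') e%:E; first by rewrite (uniq C' hC' hlt).
  exact: le_trans (ltW hCe) hge.
by rewrite muleA -EFinM mulfV // mul1e.
Qed.

Hypotheses (hM : is_metric dM) (hX : is_metric dX).

Let dMii i : dM i i = 0. Proof. by case: hM => _ [/(_ i i) [_ ->]]. Qed.
Let dXxx x : dX x x = 0. Proof. by case: hX => _ [/(_ x x) [_ ->]]. Qed.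

Lemma fibres_disjoint (C : M -> set X) (e : R) :
  (e%:E <= sM dM)%E -> (dis dM dX C < e%:E)%E ->
  forall i j x, C i x -> C j x -> i = j.
Proof.
move=> hs hC i j x hi hj; apply: contrapT => nij.
have := dis_lt_dist hC hi hj; rewrite dXxx subr0 ger0_norm; last by case: hM.
have := le_trans hs (sM_lbound nij); rewrite lee_fin => hle hlt.
by have := le_lt_trans hle hlt; rewrite ltxx.
Qed.

Lemma fibre_inj (C : M -> set X) (e : R) :
  (e%:E <= sM dM)%E -> (dis dM dX C < e%:E)%E -> correspondence C ->
  injective C.
Proof.
move=> hs hC [ne _] i j eij; have [x hx] := ne i.
by apply: (fibres_disjoint hs hC hx); rewrite -eij.
Qed.

Lemma diam_fibre_le_dis (C : M -> set X) i : (diam dX (C i) <= dis dM dX C)%E.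
Proof.
apply: ge_ereal_sup => _ [x [y [hx [hy ->]]]].
have := dis_ubound dM dX hx hy; rewrite dMii sub0r normrN ger0_norm //.
by case: hX.
Qed.

Lemma fibre_meet_subset (C C' : M -> set X) (e : R) :
  ((2 * e)%:E <= sM dM)%E -> correspondence C ->
  (dis dM dX C < e%:E)%E -> (dis dM dX C' < e%:E)%E ->
  forall i j x, C i x -> C' j x -> C' j `<=` C i.
Proof.
move=> hs hC hCe hC'e i j x hi hj y hy; have [k hk] := hC.2 y.
suff -> : i = k by [].
apply: contrapT => nik.
have := le_trans hs (sM_lbound nik); rewrite lee_fin => hik.
have := dis_lt_dist hCe hi hk; have := dis_lt_dist hC'e hj hy.
rewrite dMii !ltr_norml => /andP[a1 a2] /andP[b1 b2].
by clear hs hCe hC'e nik; lra.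
Qed.

Lemma fibre_in_range (C C' : M -> set X) (e : R) :
  ((2 * e)%:E <= sM dM)%E ->
  correspondence C -> (dis dM dX C < e%:E)%E ->
  correspondence C' -> (dis dM dX C' < e%:E)%E ->
  forall j, exists i, C' j = C i.
Proof.
move=> hs hC hCe hC' hC'e j.
have [x hx] := hC'.1 j; have [i hi] := hC.2 x.
exists i; apply/seteqP; split.
- exact: (fibre_meet_subset hs hC hCe hC'e hi hx).
- exact: (fibre_meet_subset hs hC' hC'e hCe hx hi).
Qed.

Section Uniqueness.
Variables (C C' : M -> set X) (e : R).
Hypotheses (hs : ((2 * e)%:E <= sM dM)%E).
Hypotheses (hC : correspondence C) (hCe : (dis dM dX C < e%:E)%E).
Hypotheses (hC' : correspondence C') (hC'e : (dis dM dX C' < e%:E)%E).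

Lemma range_fibres_eq : range C' = range C.
Proof.
apply/seteqP; split => _ [j _ <-].
- by have [i ->] := fibre_in_range hs hC hCe hC' hC'e j; exists i.
- by have [i ->] := fibre_in_range hs hC' hC'e hC hCe j; exists i.
Qed.

Let correspondence_inj (D : M -> set X) :
  correspondence D -> (dis dM dX D < e%:E)%E -> injective D.
Proof.
move=> hD hDe i j eij; have [x hx] := hD.1 i.
have := dis_lt_dist hDe hx hx; rewrite dMii dXxx subrr normr0 => e0.
apply: (fibre_inj (e := e)) eij => //; apply: le_trans hs.
by rewrite lee_fin ler_peMl ?(ltW e0) ?ler1n.
Qed.

Lemma fibres_reindex : exists f : M -> M, bijective f /\ forall j, C' j = C (f j).
Proof.
have /choice[f hf] := fibre_in_range hs hC hCe hC' hC'e.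
have /choice[g hg] := fibre_in_range hs hC' hC'e hC hCe.
exists f; split => //; exists g => [j|i].
- by apply: (correspondence_inj hC' hC'e); rewrite -hg -hf.
- by apply: (correspondence_inj hC hCe); rewrite -hf -hg.
Qed.

Lemma correspondence_unique : ((2 * e)%:E <= eM dM)%E -> C' = C.
Proof.
move=> he; have [f [bf hf]] := fibres_reindex.
suff fid : f = id by apply/funext => j; rewrite hf fid.
apply: contrapT => nf.
have hfe : (eM dM <= dis dM dM (graph f))%E by apply: ereal_inf_lbound; exists f.
have := le_trans he (le_trans hfe (dis_graph_le_disD hC'.1 hf)).
rewrite leNgt => /negP; apply.
by rewrite mulr_natl mulr2n EFinD; exact: lteD.
Qed.

End Uniqueness.
End GromovHausdorff.

Unset Implicit Arguments.

Theorem mainTheorem15 (R : realType) (M X : Type)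
    (dM : M -> M -> R) (dX : X -> X -> R)
    (hM : is_metric dM) (hX : is_metric dX)
    (h3 : exists a b c : M, a <> b /\ b <> c /\ a <> c)
    (hr : (dGH dM dX < sM dM * (2^-1)%:E)%E)
    (d : R)
    (hrd : (dGH dM dX < d%:E)%E)
    (hds : (d%:E <= sM dM * (2^-1)%:E)%E) :
  (* (1) *)
  (exists C : M -> set X, correspondence C /\
      (dis dM dX C < (2 * d)%:E)%E /\ ((2 * d)%:E <= sM dM)%E) /\
  (forall C : M -> set X, correspondence C -> (dis dM dX C < (2 * d)%:E)%E ->
    (* (2) D_C = {C i}_i is a partition of X *)
    ((forall i, exists x, C i x) /\
     (forall i j x, C i x -> C j x -> i = j) /\
     (forall x, exists i, C i x)) /\
    (* (3) *)
    (forall i j xi xj, C i xi -> C j xj ->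
       `| dX xi xj - dM i j | < 2 * d /\ ((2 * d)%:E <= sM dM)%E) /\
    (* (4) *)
    (forall i, (diam dX (C i) < (2 * d)%:E)%E /\ ((2 * d)%:E <= sM dM)%E) /\
    (* (5) *)
    ((d%:E <= sM dM * (4^-1)%:E)%E ->
       forall C' : M -> set X, correspondence C' ->
         (dis dM dX C' < (2 * d)%:E)%E -> range C' = range C) /\
    (* (6) *)
    ((d%:E <= sM dM * (4^-1)%:E)%E -> (d%:E <= eM dM * (4^-1)%:E)%E ->
       (forall C' : M -> set X, correspondence C' ->
          (dis dM dX C' < (2 * d)%:E)%E -> C' = C) /\
       dis dM dX C = (2%:E * dGH dM dX)%E /\
       (forall i, (diam dX (C i) <= dis dM dX C)%E) /\
       (forall i j xi xj, i <> j -> C i xi -> C j xj ->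
          ((`| dX xi xj - dM i j |)%:E <= dis dM dX C)%E))).
Proof.
have h2d : ((2 * d)%:E <= sM dM)%E by apply: lee_EFinM_of_le_divr.
have h4d q : (d%:E <= q * 4^-1%:E)%E -> ((2 * (2 * d))%:E <= q)%E.
  by rewrite mulrA -natrM; apply: lee_EFinM_of_le_divr.
split; first by have [C [hC hCd]] := dGH_lt_ex_correspondence hrd; exists C.
move=> C hC hCd.
split; first by split; [|split; [exact: fibres_disjoint hCd|]]; apply hC.
split; first by move=> i j xi xj hi hj; rewrite distrC (dis_lt_dist hCd).
split; first by move=> i; rewrite (le_lt_trans (diam_fibre_le_dis hM hX C i) hCd).
split.
  by move=> h4 C' hC' hC'd; exact (range_fibres_eq hM (h4d _ h4) hC hCd hC' hC'd).
move=> h4 h4e.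
have uniq C' : correspondence C' -> (dis dM dX C' < (2 * d)%:E)%E -> C' = C.
  move=> hC' hC'd.
  exact (correspondence_unique hM hX (h4d _ h4) hC hCd hC' hC'd (h4d _ h4e)).
split=> //; split; first exact: dis_eq_dGH hC hCd uniq.
split; first by move=> i; apply: diam_fibre_le_dis.
by move=> i j xi xj _ hi hj; rewrite distrC; apply: dis_ubound.
Qed.
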